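(* Let $(E,j)$ be a soft inductive system of Banach spaces whose connecting maps are asymptotically isometric, i.e. $$\lim_{n\gg m}\lambda_{nm}=1,\qquad \lambda_{nm}:=\inf_{x_m\in E_m,\ \|x_m\|=1}\|j_{nm}x_m\|.$$ Then a uniformly bounded net $x_\bullet$ is $j$-convergent if and only if $\lim_n j_{\infty n}x_n$ exists in $E_\infty$; in that case $j\text{-}\lim_nx_n=\lim_n j_{\infty n}x_n$.
   Context: Let $(N,\le)$ be a directed set; $\lim_{n\gg m}a_{nm}:=\lim_m\limsup_n a_{nm}$. A soft inductive system $(E,j)$: Banach spaces $E_n$, linear contractions $j_{nm}:E_m\to E_n$ ($n\ge m$), $j_{nn}=\mathrm{id}$, $j_{nm}=0$ if $n\not\ge m$, with $\lim_{n\gg m}\|(j_{nl}-j_{nm}j_{ml})x_l\|=0$ for all $l,x_l$. Nets $x_\bullet=(x_n)$, $x_n\in E_n$; seminorm $|x_\bullet|=\limsup_n\|x_n\|$ on uniformly bounded nets. Basic nets: $j_{\bullet m}x_m=(j_{nm}x_m)_n$. $C(E,j)$ ($j$-convergent nets): seminorm closure of basic nets; $C_0(E,j)$: nets with $\|x_n\|\to0$. $E_\infty:=C(E,j)/C_0(E,j)$ with norm $\|x_\infty\|=|x_\bullet|$, $x_\infty=j\text{-}\lim_nx_n$ the class of $x_\bullet$; $j_{\infty m}x_m:=j\text{-}\lim_nj_{nm}x_m$. *)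

From HB Require Import structures.
From mathcomp Require Import all_boot all_order all_algebra.
From mathcomp Require Import all_classical all_reals all_analysis.
Set Implicit Arguments. Unset Strict Implicit. Unset Printing Implicit Defensive.
Import Order.TTheory GRing.Theory Num.Theory.
Import numFieldNormedType.Exports.
Local Open Scope classical_set_scope.
Local Open Scope ring_scope.

Section SoftInductive.
Variables (R : realType) (N : Type) (le : N -> N -> Prop).

Definition directed_set : Prop :=
  [/\ inhabited N, (forall a, le a a),
      (forall a b c, le a b -> le b c -> le a c) &
      (forall a b, exists c, le a c /\ le b c)].

Definition limsupN (f : N -> \bar R) : \bar R :=
  ereal_inf [set ereal_sup [set f n | n in [set n | le m n]] | m in [set: N]].

Definition cvgN (g : N -> \bar R) (l : R) : Prop :=
  forall e : R, 0 < e -> exists m0, forall m, le m0 m ->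
    (`| g m - l%:E | < e%:E)%E.

(* lim_{n >> m} a n m = l  :=  lim_m limsup_n a n m = l *)
Definition limgg (a : N -> N -> \bar R) (l : R) : Prop :=
  cvgN (fun m => limsupN (fun n => a n m)) l.

Variables (E : N -> completeNormedModType R)
          (j : forall n m : N, {linear E m -> E n}).

Definition soft_inductive_system : Prop :=
  [/\ (forall n m, le m n -> forall x : E m, `| j n m x | <= `| x |),
      (forall n (x : E n), j n n x = x),
      (forall n m, ~ le m n -> forall x : E m, j n m x = 0) &
      (forall l (x : E l),
         limgg (fun n m => (`| j n l x - j n m (j m l x) |)%:E) 0)].

(* lambda_{nm} = inf_{||x_m|| = 1} ||j_{nm} x_m||  (inf of empty set = +oo) *)
Definition lambda (n m : N) : \bar R :=
  ereal_inf [set (`| j n m x |)%:E | x in [set x : E m | `| x | = 1]].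

Definition asymptotically_isometric : Prop := limgg lambda 1.

Definition net := forall n : N, E n.

Definition unif_bounded (x : net) : Prop :=
  exists M : R, forall n, `| x n | <= M.

Definition seminormN (x : net) : \bar R := limsupN (fun n => (`| x n |)%:E).

Definition net_sub (x y : net) : net := fun n => x n - y n.

Definition basic (m : N) (xm : E m) : net := fun n => j n m xm.

(* C(E,j): closure, for the seminorm, of the set of basic nets,
   inside the space of uniformly bounded nets *)
Definition jconvergent (x : net) : Prop :=
  unif_bounded x /\
  forall e : R, 0 < e -> exists m (xm : E m),
    (seminormN (net_sub x (basic xm)) < e%:E)%E.

Definition null_net (x : net) : Prop := cvgN (fun n => (`| x n |)%:E) 0.

(* In E_oo = C/C_0 (norm ||[y]|| = |y_.|), the net n |-> j_{oo n} x_n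
   converges to the class of y : C, i.e. ||j_{oo n} x_n - [y]|| -> 0. *)
Definition jinf_lim (x y : net) : Prop :=
  cvgN (fun n => seminormN (net_sub (basic (x n)) y)) 0.

End SoftInductive.

(* Everything reduces to estimates on limsup over the directed set N.
   - For a j-convergent y, limsup_k ||j_{kn} y_n - y_k|| -> 0 as n grows
     (approximate y by a basic net j_{.m} z and use the soft compatibility
     of j); this says j_{oo n} y_n -> [y], giving the forward direction
     with y := x.
   - Asymptotic isometry makes j_{.k} eventually "bounded below by 1/2":
     if ||j_{lk} z|| <= d for all large l then ||z|| < 2 d.  Combined with
     the previous estimate this shows that j_{oo n} x_n -> [y] forces
     ||x_n - y_n|| -> 0 (uniqueness of the limit).
   - A uniformly bounded net differing from a j-convergent one by a null
     net is j-convergent, which gives the backward direction. *)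
From HB Require Import structures.
From mathcomp Require Import all_boot all_order all_algebra.
From mathcomp Require Import all_classical all_reals all_analysis.
From mathcomp Require Import lra.
Import Order.TTheory GRing.Theory Num.Theory.
Import numFieldNormedType.Exports.
Local Open Scope classical_set_scope.
Local Open Scope ring_scope.

Lemma lt_of_abs_sub0_lt {R : realType} {g : \bar R} {e : R} :
  (`| g - 0%:E | < e%:E)%E -> (g < e%:E)%E.
Proof. by rewrite sube0 => /(le_lt_trans (lee_abs _)). Qed.

Lemma abs_sub0_lt {R : realType} (g : \bar R) (e : R) :
  (0 <= g)%E -> (g < e%:E)%E -> (`| g - 0%:E | < e%:E)%E.
Proof. by move=> g_ge0; rewrite sube0 gee0_abs. Qed.

Lemma half_lt_of_near1 {R : realType} (s : \bar R) :
  (`| s - 1%:E | < (1/2)%:E)%E -> ((1/2)%:E < s)%E.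
Proof.
case: s => [r| |] //=; rewrite !lte_fin => h.
by have := ler_norm (1 - r); rewrite distrC; lra.
Qed.

Section LimsupN.
Variables (R : realType) (N : Type) (le : N -> N -> Prop).

Lemma limsupN_lt_eventually (f : N -> \bar R) (e : R) :
  (limsupN le f < e%:E)%E -> exists m, forall n, le m n -> (f n < e%:E)%E.
Proof.
move=> /ereal_inf_lt[_ [m _ <-]] sup_lt; exists m => n mn.
by apply: le_lt_trans sup_lt; apply: ereal_sup_ubound; exists n.
Qed.

Lemma limsupN_le_eventually (f : N -> \bar R) (e : R) (m : N) :
  (forall n, le m n -> (f n <= e%:E)%E) -> (limsupN le f <= e%:E)%E.
Proof.
move=> f_le; apply: ge_ereal_inf.
exists (ereal_sup [set f n | n in [set n | le m n]]); first by exists m.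
by apply: ge_ereal_sup => _ [n mn <-]; apply: f_le.
Qed.

Lemma limsupN_ge0 (f : N -> \bar R) :
  (forall a, le a a) -> (forall n, (0 <= f n)%E) -> (0 <= limsupN le f)%E.
Proof.
move=> le_refl f_ge0; apply/ereal_infP => _ [m _ <-].
by apply: le_trans (f_ge0 m) _; apply: ereal_sup_ubound; exists m.
Qed.

End LimsupN.
Arguments limsupN_lt_eventually {R N le f e}.
Arguments limsupN_le_eventually {R N le f e} m.

Section SoftSystem.
Variables (R : realType) (N : Type) (le : N -> N -> Prop)
  (E : N -> completeNormedModType R) (j : forall n m : N, {linear E m -> E n}).
Hypothesis dirN : directed_set le.
Hypothesis softE : soft_inductive_system le j.

Let leN_refl a : le a a. Proof. by case: dirN. Qed.

Let leN_trans a b c : le a b -> le b c -> le a c.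
Proof. by case: dirN => _ _ + _; apply. Qed.

Lemma eventually_and {P Q : N -> Prop} :
  (exists a, forall n, le a n -> P n) -> (exists b, forall n, le b n -> Q n) ->
  exists c, forall n, le c n -> P n /\ Q n.
Proof.
move=> [a Pa] [b Qb]; case: dirN => _ _ _ /(_ a b) [c [ac bc]].
by exists c => n cn; split; [apply: Pa; apply: leN_trans ac cn
                            | apply: Qb; apply: leN_trans bc cn].
Qed.

(* All connecting maps are contractions (j_{nm} = 0 when m is not <= n). *)
Lemma j_contraction n m (z : E m) : `|j n m z| <= `|z|.
Proof.
case: softE => contr _ j_zero _; have [mn|not_mn] := pselect (le m n).
  exact: contr.
by rewrite j_zero // normr0.
Qed.

Lemma jconvergent_basic_close {y : net E} : jconvergent le j y ->
  forall e : R, 0 < e -> exists n0, forall n, le n0 n ->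
    (limsupN le (fun k => (`|j k n (y n) - y k|)%:E) < e%:E)%E.
Proof.
move=> [_ approx] e e_gt0; have e4_gt0 : 0 < e / 4 by lra.
have [m [z yz]] := approx _ e4_gt0.
have yz_tail := limsupN_lt_eventually yz.
(* soft compatibility: j_{.m} z is close to j_{.n} (j_{nm} z) for large n *)
case: softE => _ _ _ /(_ m z (e / 4) e4_gt0) compat.
have [c near_n] := eventually_and yz_tail compat.
exists c => n cn; have [yz_n compat_n] := near_n n cn.
have [b compat_tail] := limsupN_lt_eventually (lt_of_abs_sub0_lt compat_n).
have [d near_k] := eventually_and (ex_intro _ b compat_tail) yz_tail.
apply: (@le_lt_trans _ _ (e / 4 + e / 4 + e / 4)%:E); last by rewrite lte_fin; lra.
apply: (limsupN_le_eventually d) => k dk; have [compat_k yz_k] := near_k k dk.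
move: yz_n compat_k yz_k; rewrite /net_sub /basic /= !lte_fin lee_fin.
move=> yz_n compat_k yz_k.
have -> : j k n (y n) - y k =
    j k n (y n - j n m z) + (j k n (j n m z) - j k m z) + (j k m z - y k).
  by rewrite linearB /= !addrA subrK addrNK.
apply: (le_trans (ler_normD _ _)); apply: lerD; last by rewrite distrC ltW.
apply: (le_trans (ler_normD _ _)); apply: lerD.
  exact: le_trans (j_contraction _ _ _) (ltW yz_n).
by rewrite distrC ltW.
Qed.

Lemma jconvergent_jinf_lim (y : net E) : jconvergent le j y -> jinf_lim le j y y.
Proof.
move=> y_conv e e_gt0; have [n0 close] := jconvergent_basic_close y_conv _ e_gt0.
exists n0 => n n0n; apply: abs_sub0_lt; last exact: close.
by apply: limsupN_ge0 => // k.
Qed.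

Lemma jconvergent_null_perturb (x y : net E) : unif_bounded x ->
  null_net le (net_sub x y) -> jconvergent le j y -> jconvergent le j x.
Proof.
move=> x_bnd xy_null [_ approx]; split => // e e_gt0.
have e4_gt0 : 0 < e / 4 by lra.
have [m [z yz]] := approx _ e4_gt0.
have [d near_k] :=
  eventually_and (limsupN_lt_eventually yz) (xy_null _ e4_gt0).
exists m, z.
apply: (@le_lt_trans _ _ (e / 4 + e / 4)%:E); last by rewrite lte_fin; lra.
apply: (limsupN_le_eventually d) => k dk.
have [yz_k /lt_of_abs_sub0_lt xy_k] := near_k k dk.
move: yz_k xy_k; rewrite /net_sub /basic /= !lte_fin lee_fin => yz_k xy_k.
have -> : x k - j k m z = (x k - y k) + (y k - j k m z) by rewrite addrA subrK.
by apply: (le_trans (ler_normD _ _)); lra.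
Qed.

Hypothesis isoE : asymptotically_isometric le j.

Lemma norm_lt_of_eventually_small k (z : E k) (d : R) : 0 < d ->
  ((1/2)%:E < limsupN le (fun l => lambda j l k))%E ->
  (exists m, forall l, le m l -> `|j l k z| <= d) -> `|z| < 2 * d.
Proof.
move=> d_gt0 lambda_gt [m small].
have [->|z_neq0] := eqVneq z 0; first by rewrite normr0; lra.
have z_gt0 : 0 < `|z| by rewrite normr_gt0.
pose u := `|z|^-1 *: z.
have u_unit : `|u| = 1 by rewrite normrZ normfV normr_id mulVf // gt_eqF.
have : (limsupN le (fun l => lambda j l k) <= (d / `|z|)%:E)%E.
  apply: (limsupN_le_eventually m) => l ml.
  apply: (@le_trans _ _ (`|j l k u|)%:E).
    by apply: ereal_inf_lbound; exists u.
  rewrite lee_fin /u linearZ /= normrZ normfV normr_id mulrC.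
  by rewrite ler_pM2r ?invr_gt0 // small.
by move=> /(lt_le_trans lambda_gt); rewrite lte_fin ltr_pdivlMr //; lra.
Qed.

Lemma jinf_lim_null (x y : net E) : jconvergent le j y ->
  jinf_lim le j x y -> null_net le (net_sub x y).
Proof.
move=> y_conv xy_lim e e_gt0; have e4_gt0 : 0 < e / 4 by lra.
have [c near_n] := eventually_and (xy_lim _ e4_gt0)
  (eventually_and (jconvergent_basic_close y_conv _ e4_gt0)
                  (isoE (1/2) ltac:(lra))).
exists c => n cn; have [xy_n [y_n lambda_n]] := near_n n cn.
apply: abs_sub0_lt; first by rewrite lee_fin.
rewrite lte_fin /net_sub (_ : e = 2 * (e / 2)); last by lra.
apply: norm_lt_of_eventually_small; [lra | exact: half_lt_of_near1 |].
have [d near_l] := eventually_and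
  (limsupN_lt_eventually (lt_of_abs_sub0_lt xy_n)) (limsupN_lt_eventually y_n).
exists d => l dl; have [xy_l y_l] := near_l l dl.
move: xy_l y_l; rewrite /net_sub /basic /= !lte_fin => xy_l y_l.
have -> : j l n (x n - y n) = (j l n (x n) - y l) - (j l n (y n) - y l).
  by rewrite linearB /= opprB addrA subrK.
by apply: (le_trans (ler_normB _ _)); lra.
Qed.

End SoftSystem.
Arguments jconvergent_jinf_lim {R N le E j}.
Arguments jconvergent_null_perturb {R N le E j}.
Arguments jinf_lim_null {R N le E j}.

Theorem mainTheorem4 (R : realType) (N : Type) (le : N -> N -> Prop)
  (E : N -> completeNormedModType R) (j : forall n m : N, {linear E m -> E n}) :
  directed_set le ->
  soft_inductive_system le j ->
  asymptotically_isometric le j ->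
  forall x : net E, unif_bounded x ->
    (jconvergent le j x <->
       exists y : net E, jconvergent le j y /\ jinf_lim le j x y) /\
    (jconvergent le j x ->
       forall y : net E, jconvergent le j y -> jinf_lim le j x y ->
         null_net le (net_sub x y)).
Proof.
move=> dirN softE isoE x x_bnd.
have unique_lim := jinf_lim_null dirN softE isoE x.
split; last by move=> _ y y_conv xy_lim; apply: unique_lim.
split=> [x_conv | [y [y_conv xy_lim]]].
- by exists x; split=> //; apply: (jconvergent_jinf_lim dirN softE).
- apply: (jconvergent_null_perturb dirN x y x_bnd _ y_conv).
  exact: unique_lim.
Qed.
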